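(* There is an absolute constant $C>0$ such that the following holds. Let $\varepsilon>0$, let $f:\mathbb R\to\mathbb R$ be $1$-smooth, and let $x_-<x_+$ satisfy $f'(x_-)\le-\varepsilon$ and $f(x_+)\ge f(x_-)$. Then BinarySearchIII$(x_-,x_+)$ terminates and outputs an $\varepsilon$-stationary point of $f$ using at most $C\bigl(1+\max\{0,\log\frac{x_+-x_-}{\varepsilon}\}\bigr)$ oracle queries.
   Context: $f:\mathbb R\to\mathbb R$ is $1$-smooth if it is continuously differentiable and $f'$ is $1$-Lipschitz; $x$ is an $\varepsilon$-stationary point if $|f'(x)|<\varepsilon$. The oracle returns $(f(x),f'(x))$ on query $x$; values at already-queried points (including $x_\pm$) are reused. Subroutines (a recursive call's output is returned unchanged): BinarySearch$(x_0,x_1)$: $m=(x_0+x_1)/2$; if $|f'(m)|<\varepsilon$ return $m$; if $f'(m)\le-\varepsilon$ return BinarySearch$(m,x_1)$; if $f'(m)>0$ return BinarySearch$(x_0,m)$. BinarySearchIII$(x_-,x_+)$: $m=(x_-+x_+)/2$; if $|f'(m)|<\varepsilon$ return $m$; else if $f'(m)>0$ return BinarySearch$(x_-,m)$; else if $f(m)\ge f(x_-)$ return BinarySearchIII$(x_-,m)$; else return BinarySearchIII$(m,x_+)$. *)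

From Stdlib Require Import Reals Lra.
Open Scope R_scope.

Definition one_smooth (f f' : R -> R) : Prop :=
  (forall x, derivable_pt_lim f x (f' x)) /\
  (forall x y, Rabs (f' x - f' y) <= Rabs (x - y)).

Definition eps_stationary (f' : R -> R) (eps x : R) : Prop := Rabs (f' x) < eps.

(* Big-step semantics of the algorithms.
   [BinarySearch eps f f' x0 x1 out k] : the call BinarySearch(x0,x1) terminates,
   returns [out], and makes [k] oracle queries (one fresh query per call, at the
   midpoint; the endpoints' values are reused). *)
Inductive BinarySearch (eps : R) (f f' : R -> R) : R -> R -> R -> nat -> Prop :=
| BS_stop x0 x1 :
    Rabs (f' ((x0 + x1) / 2)) < eps ->
    BinarySearch eps f f' x0 x1 ((x0 + x1) / 2) 1
| BS_right x0 x1 out k :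
    ~ (Rabs (f' ((x0 + x1) / 2)) < eps) ->
    f' ((x0 + x1) / 2) <= - eps ->
    BinarySearch eps f f' ((x0 + x1) / 2) x1 out k ->
    BinarySearch eps f f' x0 x1 out (S k)
| BS_left x0 x1 out k :
    ~ (Rabs (f' ((x0 + x1) / 2)) < eps) ->
    ~ (f' ((x0 + x1) / 2) <= - eps) ->
    f' ((x0 + x1) / 2) > 0 ->
    BinarySearch eps f f' x0 ((x0 + x1) / 2) out k ->
    BinarySearch eps f f' x0 x1 out (S k).

Inductive BinarySearchIII (eps : R) (f f' : R -> R) : R -> R -> R -> nat -> Prop :=
| BS3_stop xm xp :
    Rabs (f' ((xm + xp) / 2)) < eps ->
    BinarySearchIII eps f f' xm xp ((xm + xp) / 2) 1
| BS3_pos xm xp out k :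
    ~ (Rabs (f' ((xm + xp) / 2)) < eps) ->
    f' ((xm + xp) / 2) > 0 ->
    BinarySearch eps f f' xm ((xm + xp) / 2) out k ->
    BinarySearchIII eps f f' xm xp out (S k)
| BS3_left xm xp out k :
    ~ (Rabs (f' ((xm + xp) / 2)) < eps) ->
    ~ (f' ((xm + xp) / 2) > 0) ->
    f ((xm + xp) / 2) >= f xm ->
    BinarySearchIII eps f f' xm ((xm + xp) / 2) out k ->
    BinarySearchIII eps f f' xm xp out (S k)
| BS3_right xm xp out k :
    ~ (Rabs (f' ((xm + xp) / 2)) < eps) ->
    ~ (f' ((xm + xp) / 2) > 0) ->
    ~ (f ((xm + xp) / 2) >= f xm) ->
    BinarySearchIII eps f f' ((xm + xp) / 2) xp out k ->
    BinarySearchIII eps f f' xm xp out (S k).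

(* A bracket [x0, x1] with f'(x0) <= -eps and f(x1) >= f(x0) contains, by the
   mean value theorem, a point c with f'(c) >= 0, and since f' is 1-Lipschitz,
   c - x0 >= eps: the bracket is longer than eps.  Every unsuccessful query of
   BinarySearchIII halves the bracket and keeps this invariant, or hands over to
   BinarySearch on a half whose endpoints have f' <= -eps and f' >= eps, which
   cannot be shorter than 2 eps.  Hence both searches stop after at most
   log2((x+ - x-) / eps) + 1 halvings. *)

From Stdlib Require Import Reals Lra Lia.
Open Scope R_scope.

Lemma Rabs_not_lt_cases (a e : R) : ~ Rabs a < e -> a <= - e \/ a >= e.
Proof. unfold Rabs; destruct (Rcase_abs a); lra. Qed.

Lemma pow2_bracket (t : R) : 1 <= t -> exists n : nat, 2 ^ n <= t < 2 ^ S n.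
Proof.
  intros Ht.
  assert (below : forall M, t < 2 ^ M -> exists n : nat, 2 ^ n <= t < 2 ^ S n).
  { induction M as [|M IH]; simpl; intros HM; [lra|].
    destruct (Rlt_dec t (2 ^ M)) as [Hlt|Hge]; [exact (IH Hlt)|].
    exists M; simpl; lra. }
  destruct (INR_unbounded t) as [M HM].
  apply (below M).
  assert (INR M + 1 <= 2 ^ M).
  { clear; induction M as [|M IH]; [simpl; lra|].
    rewrite S_INR; simpl; pose proof (pow_R1_Rle 2 M); lra. }
  lra.
Qed.

Lemma INR_le_2ln_of_pow2_le (n : nat) (t : R) : 2 ^ n <= t -> INR n <= 2 * ln t.
Proof.
  intros Hn.
  assert (Hpos : 0 < 2 ^ n) by (apply pow_lt; lra).
  assert (Hln : INR n * ln 2 <= ln t).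
  { rewrite <- ln_pow by lra.
    destruct (Rle_lt_or_eq_dec _ _ Hn) as [Hlt|Heq].
    - left; apply ln_increasing; assumption.
    - rewrite Heq; lra. }
  pose proof ln_lt_2; pose proof (pos_INR n); nra.
Qed.

Section Searches.

Variables (eps : R) (f f' : R -> R).

Section BinarySearch.

Hypothesis f'_lipschitz : forall x y, Rabs (f' x - f' y) <= Rabs (x - y).

Lemma BinarySearch_within (n : nat) (x0 x1 : R) :
  x0 < x1 -> f' x0 <= - eps -> f' x1 >= eps -> x1 - x0 < eps * 2 ^ n ->
  exists out k, BinarySearch eps f f' x0 x1 out k /\
                eps_stationary f' eps out /\ (k <= n)%nat.
Proof.
  revert x0 x1; induction n as [|n IH]; simpl; intros x0 x1 H01 H0 H1 Hlen.
  - pose proof (f'_lipschitz x1 x0) as HL.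
    rewrite !Rabs_right in HL by lra; lra.
  - set (m := (x0 + x1) / 2).
    destruct (Rlt_dec (Rabs (f' m)) eps) as [Hst|Hst].
    { exists m, 1%nat; split; [now apply BS_stop|split; [exact Hst|lia]]. }
    destruct (Rle_dec (f' m) (- eps)) as [Hr|Hr].
    + destruct (IH m x1) as (out & k & Hrun & Hout & Hk); unfold m in *; try lra.
      exists out, (S k); split; [now apply BS_right|split; [exact Hout|lia]].
    + destruct (Rabs_not_lt_cases _ _ Hst) as [Hc|Hc]; [lra|].
      destruct (IH x0 m) as (out & k & Hrun & Hout & Hk); unfold m in *; try lra.
      exists out, (S k); split; [apply BS_left; auto; lra|split; [exact Hout|lia]].
Qed.

End BinarySearch.

Hypothesis f_smooth : one_smooth f f'.

Lemma bracket_width_gt_eps (x0 x1 : R) :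
  x0 < x1 -> f' x0 <= - eps -> f x1 >= f x0 -> x1 - x0 > eps.
Proof.
  destruct f_smooth as [Hder HL]; intros H01 H0 H1.
  destruct (MVT_cor2 f f' x0 x1 H01 (fun c _ => Hder c)) as (c & Hmvt & Hc).
  assert (Hc_nonneg : 0 <= f' c).
  { destruct (Rle_dec 0 (f' c)) as [|Hneg]; [assumption|].
    assert (f' c * (x1 - x0) < 0) by (apply Rmult_neg_pos; lra); lra. }
  pose proof (HL c x0) as Hlip; pose proof (RRle_abs (f' c - f' x0)).
  rewrite (Rabs_right (c - x0)) in Hlip by lra; lra.
Qed.

Hypothesis eps_pos : 0 < eps.

Lemma BinarySearchIII_within (n : nat) (x0 x1 : R) :
  x0 < x1 -> f' x0 <= - eps -> f x1 >= f x0 -> x1 - x0 < eps * 2 ^ n ->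
  exists out k, BinarySearchIII eps f f' x0 x1 out k /\
                eps_stationary f' eps out /\ (k <= n)%nat.
Proof.
  revert x0 x1; induction n as [|n IH]; simpl; intros x0 x1 H01 H0 H1 Hlen.
  - pose proof (bracket_width_gt_eps x0 x1 H01 H0 H1); lra.
  - set (m := (x0 + x1) / 2).
    destruct (Rlt_dec (Rabs (f' m)) eps) as [Hst|Hst].
    { exists m, 1%nat; split; [now apply BS3_stop|split; [exact Hst|lia]]. }
    destruct (Rgt_dec (f' m) 0) as [Hpos|Hpos].
    + destruct (Rabs_not_lt_cases _ _ Hst) as [Hc|Hc]; [lra|].
      destruct (BinarySearch_within (proj2 f_smooth) n x0 m)
        as (out & k & Hrun & Hout & Hk); unfold m in *; try lra.
      exists out, (S k); split; [now apply BS3_pos|split; [exact Hout|lia]].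
    + destruct (Rabs_not_lt_cases _ _ Hst) as [Hc|Hc]; [|lra].
      destruct (Rge_dec (f m) (f x0)) as [Hf|Hf].
      * destruct (IH x0 m) as (out & k & Hrun & Hout & Hk); unfold m in *; try lra.
        exists out, (S k); split; [now apply BS3_left|split; [exact Hout|lia]].
      * destruct (IH m x1) as (out & k & Hrun & Hout & Hk); unfold m in *; try lra.
        exists out, (S k); split; [now apply BS3_right|split; [exact Hout|lia]].
Qed.

End Searches.

Theorem lemmaA5 :
  exists C : R, C > 0 /\
    forall (eps : R) (f f' : R -> R) (xm xp : R),
      eps > 0 ->
      one_smooth f f' ->
      xm < xp ->
      f' xm <= - eps ->
      f xp >= f xm ->
      exists (out : R) (k : nat),
        BinarySearchIII eps f f' xm xp out k /\
        eps_stationary f' eps out /\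
        INR k <= C * (1 + Rmax 0 (ln ((xp - xm) / eps))).
Proof.
  exists 2; split; [lra|].
  intros eps f f' xm xp Heps Hsmooth Hlt H0 H1.
  pose proof (bracket_width_gt_eps eps f f' Hsmooth xm xp Hlt H0 H1) as Hwidth.
  set (t := (xp - xm) / eps).
  assert (Ht : xp - xm = t * eps) by (unfold t; field; lra).
  destruct (pow2_bracket t) as (n & Hn_le & Hn_gt).
  { apply (Rmult_le_reg_r eps); lra. }
  destruct (BinarySearchIII_within eps f f' Hsmooth Heps (S n) xm xp Hlt H0 H1)
    as (out & k & Hrun & Hout & Hk).
  { rewrite Ht, Rmult_comm; apply Rmult_lt_compat_l; assumption. }
  exists out, k; split; [exact Hrun|split; [exact Hout|]].
  apply le_INR in Hk; rewrite S_INR in Hk.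
  pose proof (INR_le_2ln_of_pow2_le n t Hn_le).
  pose proof (Rmax_r 0 (ln t)); pose proof (Rmax_l 0 (ln t)).
  fold t; lra.
Qed.
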